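(* $\mathcal{C}_2(7,3,2)\le 396$.
   Context: $\mathcal{C}_q(n,k,r)$ is the minimum number of $k$-dimensional subspaces of $\mathbb{F}_q^n$ such that every $r$-dimensional subspace of $\mathbb{F}_q^n$ is contained in at least one of them. *)

From HB Require Import structures.
From mathcomp Require Import all_boot all_order all_algebra all_field.
Set Implicit Arguments. Unset Strict Implicit. Unset Printing Implicit Defensive.
Import GRing.Theory.
Local Open Scope ring_scope.

Definition is_covering (F : finFieldType) (n k r : nat)
    (S : seq {vspace 'rV[F]_n}) : Prop :=
  [/\ uniq S,
      (forall W, W \in S -> \dim W = k) &
      (forall U : {vspace 'rV[F]_n}, \dim U = r ->
         exists2 W, W \in S & (U <= W)%VS)].

Definition covering_number_le (F : finFieldType) (n k r m : nat) : Prop :=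
  exists2 S : seq {vspace 'rV[F]_n}, is_covering k r S & (size S <= m)%N.

From HB Require Import structures.
From mathcomp Require Import all_boot all_order all_algebra all_field.
From Stdlib Require Import NArith Lia.

Set Implicit Arguments. Unset Strict Implicit. Unset Printing Implicit Defensive.
Import GRing.Theory.

(* The family is
   - 256 "lifted MRD" planes, row spaces of [I_3 | M] for the 3 x 4 matrices M
     of a binary rank-distance-2 code; they cover every line meeting the
     coordinate subspace <e_4,...,e_7> trivially;
   - 140 planes containing a line of <e_4,...,e_7>: the 35 lines of this
     PG(3,2) are grouped into the 7 spreads of a packing, and each line is
     extended by four further generators.
   Vectors of F_2^n are encoded as bitmasks x : N, decoded by [decode n x]. *)

Lemma F2_cases (a : 'F_2) : (a = 0 \/ a = 1)%R.
Proof. by case: a => [[|[|m]] lt_m2]; [left | right | ]; try apply: val_inj. Qed.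

Lemma F2_add11 : (1 + 1 = 0 :> 'F_2)%R.
Proof. exact: val_inj. Qed.

Section BitmaskEncoding.
Local Open Scope ring_scope.

Variable n : nat.

Definition decode (x : N) : 'rV['F_2]_n :=
  \row_(j < n) (if N.testbit x (N.of_nat j) then 1 else 0).

Definition low_bits_nonzero (x : N) : bool :=
  has (fun j => N.testbit x (N.of_nat j)) (iota 0 n).

Definition bitmasks : seq N := map N.of_nat (iota 0 (2 ^ n)).

Lemma decode_xor (x y : N) : decode (N.lxor x y) = decode x + decode y.
Proof.
apply/rowP => j; rewrite !mxE N.lxor_spec.
by case: (N.testbit x _); case: (N.testbit y _); rewrite /= ?addr0 ?add0r ?F2_add11.
Qed.

Lemma decode_eq0 (x : N) : (decode x == 0) = ~~ low_bits_nonzero x.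
Proof.
apply/eqP/hasPn => [/rowP decode0 j | bits0].
  rewrite mem_iota add0n => /andP[_ lt_jn]; apply/negP => bit_j.
  have := decode0 (Ordinal lt_jn); rewrite !mxE /= bit_j.
  by move/eqP; rewrite oner_eq0.
apply/matrixP => i j; rewrite !mxE (negbTE (bits0 j _)) ?mem_iota ?ltn_ord //.
Qed.

Lemma decode_neq0 (x : N) : (decode x != 0) = low_bits_nonzero x.
Proof. by rewrite decode_eq0 negbK. Qed.

Lemma N_of_nat_pow2 (m : nat) : N.of_nat (2 ^ m) = (2 ^ N.of_nat m)%num.
Proof.
elim: m => [|m IHm] //.
by rewrite expnS Nat2N.inj_mul IHm (Nat2N.inj_succ m) N.pow_succ_r'.
Qed.

Lemma testbit_high (i : nat) (k : N) : (i < 2 ^ n)%nat -> (N.of_nat n <= k)%num ->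
  N.testbit (N.of_nat i) k = false.
Proof.
move=> /ltP lt_i_pow le_n_k; case: i lt_i_pow => [|i] lt_i_pow; first exact: N.bits_0.
apply: N.bits_above_log2; apply/N.log2_lt_pow2; first lia.
apply: (@N.lt_le_trans _ (2 ^ N.of_nat n)); last exact: N.pow_le_mono_r.
by rewrite -N_of_nat_pow2; lia.
Qed.

Lemma decode_inj : injective (fun i : 'I_(2 ^ n) => decode (N.of_nat i)).
Proof.
move=> i j /rowP same_bits; apply/val_inj/Nat2N.inj/N.bits_inj => k.
have [lt_k_n | le_n_k] := N.lt_ge_cases k (N.of_nat n); last first.
  by rewrite !testbit_high ?ltn_ord.
have lt_kn : (N.to_nat k < n)%nat by apply/ltP; lia.
have := same_bits (Ordinal lt_kn); rewrite !mxE /= N2Nat.id.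
by case: (N.testbit _ k); case: (N.testbit _ k) => // /eqP; rewrite ?oner_eq0 // eq_sym oner_eq0.
Qed.

Lemma decode_onto (u : 'rV['F_2]_n) : exists2 x, x \in bitmasks & decode x = u.
Proof.
have := inj_card_onto decode_inj.
rewrite card_mx card_Fp // card_ord mul1n => /(_ (leqnn _) u) /codomP [i ->].
by exists (N.of_nat i) => //; rewrite map_f // mem_iota ltn_ord.
Qed.

End BitmaskEncoding.

Section F2Planes.
Local Open Scope ring_scope.

Variable vT : vectType 'F_2.

Lemma F2_addvv (v : vT) : v + v = 0.
Proof. by rewrite -{1 2}[v]scale1r -scalerDl F2_add11 scale0r. Qed.

Lemma F2_addv_eq0 (u v : vT) : (u + v == 0) = (u == v).
Proof. by rewrite addr_eq0 -[- v]add0r -(F2_addvv v) addrK. Qed.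

Lemma F2_mem_span2 (y z v : vT) :
  v \in <<[:: y; z]>>%VS -> v \in [:: 0; y; z; y + z].
Proof.
rewrite span_cons span_seq1 => /memv_addP [_ /vlineP [s ->] [_ /vlineP [t ->] ->]].
by case: (F2_cases s) => ->; case: (F2_cases t) => ->;
  rewrite ?scale0r ?scale1r ?addr0 ?add0r !inE eqxx ?orbT.
Qed.

Definition F2_combinations (x y z : vT) : seq vT :=
  [:: x; y; x + y; z; x + z; y + z; x + y + z].

Lemma F2_combinations_in_span (x y z : vT) :
  {subset F2_combinations x y z <= <<[:: x; y; z]>>%VS}.
Proof.
have [mem_x mem_y mem_z] : [/\ x \in <<[:: x; y; z]>>%VS,
    y \in <<[:: x; y; z]>>%VS & z \in <<[:: x; y; z]>>%VS].
  by split; apply: memv_span; rewrite !inE eqxx ?orbT.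
by move=> v; rewrite !inE => /or4P [| | | /or4P [] ] // /eqP ->; rewrite ?memvD.
Qed.

Lemma F2_free_triple (x y z : vT) :
  all (fun v => v != 0) (F2_combinations x y z) -> free [:: x; y; z].
Proof.
case/and4P => nx ny nxy /and4P [nz nxz nyz /andP [nxyz _]].
rewrite free_cons (free_cons y) seq1_free nz andbT; apply/andP; split.
  apply/negP => /F2_mem_span2; rewrite !inE => /or4P [] /eqP x_eq.
  - by move: nx; rewrite x_eq eqxx.
  - by move: nxy; rewrite F2_addv_eq0 x_eq eqxx.
  - by move: nxz; rewrite F2_addv_eq0 x_eq eqxx.
  - by move: nxyz; rewrite -addrA F2_addv_eq0 x_eq eqxx.
apply/negP; rewrite span_seq1 => /vlineP [t y_eq].
move: ny nyz; rewrite y_eq; case: (F2_cases t) => ->.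
  by rewrite scale0r eqxx.
by rewrite scale1r F2_addvv eqxx.
Qed.

End F2Planes.

Lemma line_basis (K : fieldType) (vT : vectType K) (U : {vspace vT}) :
  \dim U = 2%nat ->
  exists u, exists v, [/\ U = <<[:: u; v]>>%VS, u != 0%R, v != 0%R & u != v].
Proof.
move=> dimU; have /andP [/eqP span_basis free_basis] := vbasisP U.
have : size (vbasis U) = 2%nat by rewrite size_tuple dimU.
move: span_basis free_basis; case: (vbasis U : seq _) => [|u [|v []]] // span_uv free_uv _.
exists u, v; split; first by rewrite span_uv.
- by apply: (free_not0 free_uv); rewrite inE eqxx.
- by apply: (free_not0 free_uv); rewrite !inE eqxx orbT.
- by have := free_uniq free_uv; rewrite /= inE andbT.
Qed.

Section PlanesFromBitmasks.
Local Open Scope ring_scope.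

Variable n : nat.

Definition xor_combinations (g : N * N * N) : seq N :=
  let: (x, y, z) := g in
  [:: x; y; N.lxor x y; z; N.lxor x z; N.lxor y z; N.lxor (N.lxor x y) z].

Definition plane (g : N * N * N) : {vspace 'rV['F_2]_n} :=
  let: (x, y, z) := g in <<[:: decode n x; decode n y; decode n z]>>%VS.

Lemma decode_xor_combinations (x y z : N) :
  map (decode n) (xor_combinations (x, y, z)) =
  F2_combinations (decode n x) (decode n y) (decode n z).
Proof. by rewrite /= !decode_xor. Qed.

Lemma decode_in_plane (g : N * N * N) (c : N) :
  c \in xor_combinations g -> decode n c \in plane g.
Proof.
case: g => [[x y] z] c_in; apply: F2_combinations_in_span.
by rewrite -decode_xor_combinations map_f.
Qed.

Lemma plane_dim (g : N * N * N) :
  all (low_bits_nonzero n) (xor_combinations g) -> \dim (plane g) = 3%nat.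
Proof.
case: g => [[x y] z] nonzero; apply/eqnP/F2_free_triple.
rewrite -decode_xor_combinations; apply/allP => _ /mapP [c c_in ->].
by rewrite decode_neq0 (allP nonzero).
Qed.

Definition blocks_through (bs : seq (seq N)) (a : N) : seq N :=
  flatten [seq c <- bs | a \in c].

Definition lines_covered (bs : seq (seq N)) : bool :=
  all (fun a => low_bits_nonzero n a ==>
    let through_a := blocks_through bs a in
    all (fun b => low_bits_nonzero n b && low_bits_nonzero n (N.lxor a b)
                  ==> (b \in through_a)) (bitmasks n))
    (bitmasks n).

Lemma lines_covered_planes (gs : seq (N * N * N)) :
  lines_covered (map xor_combinations gs) ->
  forall U : {vspace 'rV['F_2]_n}, \dim U = 2%nat ->
    exists2 g, g \in gs & (U <= plane g)%VS.
Proof.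
move=> /allP covered U /line_basis [u [v [-> u_neq0 v_neq0 u_neq_v]]].
have [a a_mask a_u] := decode_onto u.
have [b b_mask b_v] := decode_onto v.
have := covered a a_mask; rewrite -decode_neq0 a_u u_neq0 => /allP /(_ b b_mask).
rewrite -!decode_neq0 decode_xor a_u b_v F2_addv_eq0 v_neq0 u_neq_v.
case/flattenP => c /[!mem_filter] /andP [a_in /mapP [g g_in c_eq]] b_in.
rewrite {}c_eq in a_in b_in.
exists g => //; apply/span_subvP => w.
by rewrite !inE => /orP [] /eqP ->; rewrite -?a_u -?b_v decode_in_plane.
Qed.

End PlanesFromBitmasks.

(* Generator triples of the 256 lifted MRD planes of F_2^7: the generators
   have low three bits 1, 2 and 4 (the identity block I_3). *)
Definition mrd_planes : seq (N * N * N) := ([::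
  (1,2,4); (9,34,28); (17,66,52); (25,98,44); (33,26,100); (41,58,124);
  (49,90,84); (57,122,76); (65,50,92); (73,18,68); (81,114,108); (89,82,116);
  (97,42,60); (105,10,36); (113,106,12); (121,74,20); (9,18,36); (1,50,60);
  (25,82,20); (17,114,12); (41,10,68); (33,42,92); (57,74,116); (49,106,108);
  (73,34,124); (65,2,100); (89,98,76); (81,66,84); (105,58,28); (97,26,4);
  (121,122,44); (113,90,52); (17,34,68); (25,2,92); (1,98,116); (9,66,108);
  (49,58,36); (57,26,60); (33,122,20); (41,90,12); (81,18,28); (89,50,4);
  (65,82,44); (73,114,52); (113,10,124); (121,42,100); (97,74,76); (105,106,84);
  (25,50,100); (17,18,124); (9,114,84); (1,82,76); (57,42,4); (49,10,28);
  (41,106,52); (33,74,44); (89,2,60); (81,34,36); (73,66,12); (65,98,20);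
  (121,26,92); (113,58,68); (105,90,108); (97,122,116); (33,66,28); (41,98,4);
  (49,2,44); (57,34,52); (1,90,124); (9,122,100); (17,26,76); (25,58,84);
  (97,114,68); (105,82,92); (113,50,116); (121,18,108); (65,106,36); (73,74,60);
  (81,42,20); (89,10,12); (41,82,60); (33,114,36); (57,18,12); (49,50,20);
  (9,74,92); (1,106,68); (25,10,108); (17,42,116); (105,98,100); (97,66,124);
  (121,34,84); (113,2,76); (73,122,4); (65,90,28); (89,58,52); (81,26,44);
  (49,98,92); (57,66,68); (33,34,108); (41,2,116); (17,122,60); (25,90,36);
  (1,58,12); (9,26,20); (113,82,4); (121,114,28); (97,18,52); (105,50,44);
  (81,74,100); (89,106,124); (65,10,84); (73,42,76); (57,114,124); (49,82,100);
  (41,50,76); (33,18,84); (25,106,28); (17,74,4); (9,42,44); (1,10,52);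
  (121,66,36); (113,98,60); (105,2,20); (97,34,12); (89,90,68); (81,122,92);
  (73,26,116); (65,58,108); (65,26,52); (73,58,44); (81,90,4); (89,122,28);
  (97,2,84); (105,34,76); (113,66,100); (121,98,124); (1,42,108); (9,10,116);
  (17,106,92); (25,74,68); (33,50,12); (41,18,20); (49,114,60); (57,82,36);
  (73,10,20); (65,42,12); (89,74,36); (81,106,60); (105,18,116); (97,50,108);
  (121,82,68); (113,114,92); (9,58,76); (1,26,84); (25,122,124); (17,90,100);
  (41,34,44); (33,2,52); (57,98,28); (49,66,4); (81,58,116); (89,26,108);
  (65,122,68); (73,90,92); (113,34,20); (121,2,12); (97,98,36); (105,66,60);
  (17,10,44); (25,42,52); (1,74,28); (9,106,4); (49,18,76); (57,50,84);
  (33,82,124); (41,114,100); (89,42,84); (81,10,76); (73,106,100); (65,74,124);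
  (121,50,52); (113,18,44); (105,114,4); (97,82,28); (25,26,12); (17,58,20);
  (9,90,60); (1,122,36); (57,2,108); (49,34,116); (41,66,92); (33,98,68);
  (97,90,44); (105,122,52); (113,26,28); (121,58,4); (65,66,76); (73,98,84);
  (81,2,124); (89,34,100); (33,106,116); (41,74,108); (49,42,68); (57,10,92);
  (1,114,20); (9,82,12); (17,50,36); (25,18,60); (105,74,12); (97,106,20);
  (121,10,60); (113,42,36); (73,82,108); (65,114,116); (89,18,92); (81,50,68);
  (41,122,84); (33,90,76); (57,58,100); (49,26,124); (9,98,52); (1,66,44);
  (25,34,4); (17,2,28); (113,122,108); (121,90,116); (97,58,92); (105,26,68);
  (81,98,12); (89,66,20); (65,34,60); (73,2,36); (49,74,52); (57,106,44);
  (33,10,4); (41,42,28); (17,82,84); (25,114,76); (1,18,100); (9,50,124);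
  (121,106,76); (113,74,84); (105,42,124); (97,10,100); (89,114,44); (81,82,52);
  (73,50,28); (65,18,4); (57,90,20); (49,122,12); (41,26,36); (33,58,60);
  (25,66,116); (17,98,108); (9,2,68); (1,34,92)])%num.

(* Generator triples of the 140 planes meeting <e_4,...,e_7> in a line (bits
   8, 16, 32, 64): seven spreads of five lines, each line with four third
   generators. *)
Definition packing_planes : seq (N * N * N) := ([::
  (8,16,1); (8,16,33); (8,16,65); (8,16,97);
  (32,64,1); (32,64,9); (32,64,17); (32,64,25);
  (40,80,1); (40,80,9); (40,80,17); (40,80,25);
  (48,88,1); (48,88,9); (48,88,17); (48,88,25);
  (56,72,1); (56,72,9); (56,72,17); (56,72,25);
  (8,32,2); (8,32,18); (8,32,66); (8,32,82);
  (16,64,2); (16,64,10); (16,64,34); (16,64,42);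
  (24,104,2); (24,104,10); (24,104,34); (24,104,42);
  (48,72,2); (48,72,10); (48,72,18); (48,72,26);
  (56,88,2); (56,88,10); (56,88,18); (56,88,26);
  (8,48,3); (8,48,19); (8,48,67); (8,48,83);
  (16,72,3); (16,72,11); (16,72,35); (16,72,43);
  (24,96,3); (24,96,11); (24,96,35); (24,96,43);
  (32,80,3); (32,80,11); (32,80,19); (32,80,27);
  (40,64,3); (40,64,11); (40,64,19); (40,64,27);
  (8,64,4); (8,64,20); (8,64,36); (8,64,52);
  (16,96,4); (16,96,12); (16,96,36); (16,96,44);
  (24,40,4); (24,40,12); (24,40,68); (24,40,76);
  (32,88,4); (32,88,12); (32,88,20); (32,88,28);
  (56,80,4); (56,80,12); (56,80,20); (56,80,28);
  (8,80,5); (8,80,21); (8,80,37); (8,80,53);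
  (16,104,5); (16,104,13); (16,104,37); (16,104,45);
  (24,32,5); (24,32,13); (24,32,69); (24,32,77);
  (40,72,5); (40,72,13); (40,72,21); (40,72,29);
  (48,64,5); (48,64,13); (48,64,21); (48,64,29);
  (8,96,6); (8,96,22); (8,96,38); (8,96,54);
  (16,32,6); (16,32,14); (16,32,70); (16,32,78);
  (24,72,6); (24,72,14); (24,72,38); (24,72,46);
  (40,88,6); (40,88,14); (40,88,22); (40,88,30);
  (56,64,6); (56,64,14); (56,64,22); (56,64,30);
  (8,112,7); (8,112,23); (8,112,39); (8,112,55);
  (16,40,7); (16,40,15); (16,40,71); (16,40,79);
  (24,64,7); (24,64,15); (24,64,39); (24,64,47);
  (32,72,7); (32,72,15); (32,72,23); (32,72,31);
  (48,80,7); (48,80,15); (48,80,23); (48,80,31)])%num.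

Definition covering_planes : seq (N * N * N) := mrd_planes ++ packing_planes.

Lemma covering_planes_dim :
  all (fun g => all (low_bits_nonzero 7) (xor_combinations g)) covering_planes.
Proof. by vm_compute. Qed.

Lemma covering_planes_cover : lines_covered 7 (map xor_combinations covering_planes).
Proof. by vm_compute. Qed.

Theorem mainTheorem9 : covering_number_le 'F_2 7 3 2 396.
Proof.
exists (undup (map (plane 7) covering_planes)); last first.
  by rewrite (leq_trans (size_undup _)) // size_map.
split; first exact: undup_uniq.
  move=> W; rewrite mem_undup => /mapP [g g_in ->].
  exact/plane_dim/(allP covering_planes_dim).
move=> U /(lines_covered_planes covering_planes_cover) [g g_in U_sub].
by exists (plane 7 g); rewrite ?mem_undup ?map_f.
Qed.
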